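(* If $G$ and $H$ are connected graphs, then $\mathrm{gp}(G\boxtimes H)\le \min\{n(G)\,\mathrm{gp}(H),\ n(H)\,\mathrm{gp}(G)\}$.
   Context: All graphs are finite and simple; $n(G)=|V(G)|$. The strong product $G\boxtimes H$ has vertex set $V(G)\times V(H)$, with distinct $(g,h),(g',h')$ adjacent iff ($g=g'$ or $gg'\in E(G)$) and ($h=h'$ or $hh'\in E(H)$). For a connected graph $G$, a set $S\subseteq V(G)$ is a general position set if no three pairwise distinct vertices of $S$ lie on a common geodesic (shortest path); $\mathrm{gp}(G)$ is the maximum cardinality of a general position set. *)

From mathcomp Require Import all_boot all_order.
From Stdlib Require Import ClassicalEpsilon.
Set Implicit Arguments. Unset Strict Implicit. Unset Printing Implicit Defensive.

Record sgraph := SGraph {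
  vert :> finType;
  adj : rel vert;
  adj_sym : symmetric adj;
  adj_irr : irreflexive adj }.

Definition norder (G : sgraph) : nat := #|G|.

(* a walk x = v0, v1, ..., vk = y is (x, p) with p = [:: v1; ...; vk];
   its length is size p. *)
Definition is_walk (G : sgraph) (x y : G) (p : seq G) : bool :=
  path (@adj G) x p && (last x p == y).

Definition connected_graph (G : sgraph) : Prop :=
  forall x y : G, exists p, is_walk x y p.

Definition geodesic (G : sgraph) (x y : G) (p : seq G) : Prop :=
  is_walk x y p /\ forall q, is_walk x y q -> size p <= size q.

Definition on_common_geodesic (G : sgraph) (u v w : G) : Prop :=
  exists x y p, geodesic x y p /\
    [/\ u \in x :: p, v \in x :: p & w \in x :: p].

Definition gp_set (G : sgraph) (S : {set G}) : Prop :=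
  forall u v w, u \in S -> v \in S -> w \in S ->
    u != v -> v != w -> u != w -> ~ on_common_geodesic u v w.

Definition pb (P : Prop) : bool :=
  if excluded_middle_informative P then true else false.

Definition gp (G : sgraph) : nat :=
  \max_(S : {set G} | pb (gp_set S)) #|S|.

Section Strong.
Variables G H : sgraph.
Definition sp_adj : rel (G * H) := fun a b =>
  (a != b) && ((a.1 == b.1) || adj a.1 b.1) && ((a.2 == b.2) || adj a.2 b.2).
Lemma sp_adj_sym : symmetric sp_adj.
Proof.
move=> a b; rewrite /sp_adj eq_sym [b.1 == _]eq_sym [b.2 == _]eq_sym.
by rewrite (adj_sym a.1) (adj_sym a.2).
Qed.
Lemma sp_adj_irr : irreflexive sp_adj.
Proof. by move=> a; rewrite /sp_adj eqxx. Qed.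
Definition strong_prod : sgraph := @SGraph (G * H)%type sp_adj sp_adj_sym sp_adj_irr.
End Strong.

From mathcomp Require Import all_boot all_order.
From Stdlib Require Import ClassicalEpsilon.
Set Implicit Arguments. Unset Strict Implicit. Unset Printing Implicit Defensive.

(* Each layer {g} x H and G x {h} of the strong product is a retract of it:
   the inclusion preserves adjacency and the coordinate projection never
   increases distances. Hence a geodesic of the layer stays a geodesic in
   G [x] H, so a general position set of G [x] H meets every H-layer in a
   general position set of H. Summing over the n(G) layers gives
   gp(G [x] H) <= n(G) gp(H), and symmetrically for the G-layers. *)

Lemma pbP (P : Prop) : reflect P (pb P).
Proof. by rewrite /pb; case: excluded_middle_informative => p; constructor. Qed.

Lemma gp_set_card_le_gp (K : sgraph) (S : {set K}) : gp_set S -> #|S| <= gp K.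
Proof. by move=> gS; apply: (leq_bigmax_cond S); apply/pbP. Qed.

Lemma card_prod_sum (T1 T2 : finType) (A : {set T1 * T2}) :
  #|A| = \sum_(a : T1) \sum_(b : T2) ((a, b) \in A).
Proof. by rewrite pair_bigA /= -sum1_card big_mkcond; apply: eq_bigr => -[]. Qed.

Lemma card_prod_fibersl (T1 T2 : finType) (A : {set T1 * T2}) :
  #|A| = \sum_(a : T1) #|[set b | (a, b) \in A]|.
Proof.
rewrite card_prod_sum; apply: eq_bigr => a _.
by rewrite -sum1_card [RHS]big_mkcond; apply: eq_bigr => b _; rewrite inE.
Qed.

Lemma card_prod_fibersr (T1 T2 : finType) (A : {set T1 * T2}) :
  #|A| = \sum_(b : T2) #|[set a | (a, b) \in A]|.
Proof.
rewrite card_prod_sum exchange_big; apply: eq_bigr => b _.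
by rewrite -sum1_card [RHS]big_mkcond; apply: eq_bigr => a _; rewrite inE.
Qed.

Section Retract.
Variables (K L : sgraph) (f : K -> L) (r : L -> K).
Hypothesis f_adj : forall x y, adj x y -> adj (f x) (f y).
Hypothesis fK : cancel f r.
Hypothesis r_adj : forall a b, adj a b -> (r a == r b) || adj (r a) (r b).

Lemma is_walk_map (x y : K) (p : seq K) :
  is_walk x y p -> is_walk (f x) (f y) (map f p).
Proof.
rewrite /is_walk last_map => /andP[px /eqP <-]; rewrite eqxx andbT.
by elim: p x px => //= z p IHp x /andP[xz pz]; rewrite f_adj // IHp.
Qed.

Lemma is_walk_retract (a b : L) (q : seq L) :
  is_walk a b q -> exists2 q', is_walk (r a) (r b) q' & size q' <= size q.
Proof.
rewrite /is_walk => /andP[+ /eqP <-].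
elim: q a => [|c q IHq] a /=; first by exists [::]; rewrite /= ?eqxx.
case/andP=> /r_adj ac /IHq[q' /andP[pq' lq'] le_q'].
case/orP: ac => [/eqP ->|ac]; first by exists q'; rewrite ?pq' ?lq' ?leqW.
by exists (r c :: q'); rewrite /= ?ac ?pq' ?lq'.
Qed.

Lemma geodesic_map (x y : K) (p : seq K) :
  geodesic x y p -> geodesic (f x) (f y) (map f p).
Proof.
case=> Wp p_min; split; first exact: is_walk_map.
move=> q /is_walk_retract[q']; rewrite !fK size_map => /p_min.
exact: leq_trans.
Qed.

Lemma gp_set_preimset (S : {set L}) : gp_set S -> gp_set (f @^-1: S).
Proof.
have f_inj : injective f := can_inj fK.
move=> gS u v w; rewrite !inE => uS vS wS uv vw uw [x [y [p [gp_p [ux vx wx]]]]].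
apply: (gS _ _ _ uS vS wS); rewrite ?(inj_eq f_inj) //.
exists (f x), (f y), (map f p); split; first exact: geodesic_map.
by rewrite -map_cons !(mem_map f_inj).
Qed.

End Retract.

Section StrongProduct.
Variables G H : sgraph.
Notation GH := (strong_prod G H).

Lemma strong_prod_adj1 (a b : GH) : adj a b -> (a.1 == b.1) || adj a.1 b.1.
Proof. by case/andP=> /andP[]. Qed.

Lemma strong_prod_adj2 (a b : GH) : adj a b -> (a.2 == b.2) || adj a.2 b.2.
Proof. by case/andP. Qed.

Lemma strong_prod_adj_layerl (g : G) (y z : H) :
  adj y z -> adj ((g, y) : GH) (g, z).
Proof.
move=> yz; rewrite /= /sp_adj /= eqxx yz orbT !andbT.
by apply: contraTneq yz => -[->]; rewrite adj_irr.
Qed.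

Lemma strong_prod_adj_layerr (h : H) (x y : G) :
  adj x y -> adj ((x, h) : GH) (y, h).
Proof.
move=> xy; rewrite /= /sp_adj /= eqxx xy orbT !andbT.
by apply: contraTneq xy => -[->]; rewrite adj_irr.
Qed.

Lemma gp_strong_prod_leql : gp GH <= norder G * gp H.
Proof.
apply/bigmax_leqP => S /pbP gS; rewrite card_prod_fibersl /norder -sum_nat_const.
apply: leq_sum => g _; apply: gp_set_card_le_gp.
have -> : [set y | (g, y) \in S] = pair g @^-1: S by apply/setP => y; rewrite !inE.
exact: (gp_set_preimset (@strong_prod_adj_layerl g) (fun _ => erefl) strong_prod_adj2).
Qed.

Lemma gp_strong_prod_leqr : gp GH <= norder H * gp G.
Proof.
apply/bigmax_leqP => S /pbP gS; rewrite card_prod_fibersr /norder -sum_nat_const.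
apply: leq_sum => h _; apply: gp_set_card_le_gp.
have -> : [set x | (x, h) \in S] = (fun x => (x, h)) @^-1: S by apply/setP => x; rewrite !inE.
exact: (gp_set_preimset (@strong_prod_adj_layerr h) (fun _ => erefl) strong_prod_adj1).
Qed.

End StrongProduct.

Theorem corollary4p1 (G H : sgraph) :
  connected_graph G -> connected_graph H ->
  gp (strong_prod G H) <= minn (norder G * gp H) (norder H * gp G).
Proof.
by move=> _ _; rewrite leq_min gp_strong_prod_leql gp_strong_prod_leqr.
Qed.
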